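(* Let $n$ and $k$ be integers with $k\ge4$ and $n\ge3$. Then (i) $\chi_\rho(S^2_{P_k})\ge 4$, and (ii) $\chi_\rho(S^n_{P_k})\ge 5$.
   Context: $P_k$ is the path with vertex set $[k]=\{0,\dots,k-1\}$ and edges $\{i,i+1\}$, $0\le i\le k-2$. For a graph $G$ with vertex set $[k]$ and $n\ge 1$, the generalized Sierpi\'nski graph $S^n_G$ has vertex set $[k]^n$, and $u=u_1\cdots u_n$, $v=v_1\cdots v_n$ are adjacent iff there is $i$ with: $u_j=v_j$ for $j<i$; $u_i\neq v_i$ and $u_iv_i\in E(G)$; and $u_j=v_i$, $v_j=u_i$ for all $j>i$. A packing $c$-coloring of a graph $X$ is a map $f:V(X)\to\{1,\dots,c\}$ such that any two distinct vertices $u,v$ with $f(u)=f(v)=i$ satisfy $d_X(u,v)>i$; the packing chromatic number $\chi_\rho(X)$ is the least such $c$. *)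

From mathcomp Require Import all_boot.
From mathcomp Require Import boolp.
Set Implicit Arguments. Unset Strict Implicit. Unset Printing Implicit Defensive.

Definition path_graph (k : nat) : rel 'I_k :=
  fun a b => ((val a).+1 == val b) || ((val b).+1 == val a).

(* Generalized Sierpinski graph S^n_G, G a graph on 'I_k given by a relation.
   Vertices: words u = u_1 ... u_n, represented as {ffun 'I_n -> 'I_k}
   (position i of the paper is index i-1 here). *)
Definition sierpinski_adj (k : nat) (n : nat) (G : rel 'I_k) : rel {ffun 'I_n -> 'I_k} :=
  fun u v => [exists i : 'I_n,
    [&& [forall j : 'I_n, (j < i) ==> (u j == v j)],
        u i != v i, G (u i) (v i) &
        [forall j : 'I_n, (i < j) ==> ((u j == v i) && (v j == u i))]]].

Arguments sierpinski_adj : clear implicits.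
Arguments path_graph : clear implicits.

(* d_X(u,v) > i : every walk from u to v in the graph (T, e) has more than
   i edges (vacuous if u, v are in different components: distance infinity). *)
Definition dist_gt (T : eqType) (e : rel T) (u v : T) (i : nat) : Prop :=
  forall p : seq T, path e u p -> last u p = v -> i < size p.

Definition packing_coloring (T : finType) (e : rel T) (c : nat) (f : T -> nat) : Prop :=
  (forall x, 1 <= f x <= c) /\
  (forall u v, u != v -> f u = f v -> dist_gt e u v (f u)).

Definition has_packing_coloring (T : finType) (e : rel T) (c : nat) : Prop :=
  exists f : T -> nat, packing_coloring e c f.

Lemma has_packing_coloring_card (T : finType) (e : rel T) :
  has_packing_coloring e #|T|.
Proof.
exists (fun x => (enum_rank x).+1); split.
  by move=> x; rewrite /= ltn_ord.
by move=> u v Huv /eq_add_S /val_inj /enum_rank_inj Heq; rewrite Heq eqxx in Huv.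
Qed.

Lemma has_packing_coloring_ex (T : finType) (e : rel T) :
  exists c, (fun c => `[< has_packing_coloring e c >]) c.
Proof. by exists #|T|; apply/asboolP; apply: has_packing_coloring_card. Qed.

Definition packing_chromatic (T : finType) (e : rel T) : nat :=
  ex_minn (has_packing_coloring_ex e).

From mathcomp Require Import all_boot boolp zify.
Set Implicit Arguments. Unset Strict Implicit. Unset Printing Implicit Defensive.

(* Distances can only shrink along a graph homomorphism, so an injective
   homomorphism pulls packing colorings back; prepending a fixed letter embeds
   S^n_G into S^(n+1)_G, and 4-letter words embed S^m_(P_4) into S^m_(P_k).
   Hence it suffices to see that S^2_(P_4) has no packing 3-coloring and
   S^3_(P_4) no packing 4-coloring.  Both facts only involve a few vertices (the
   8 words of the two middle copies of S^2_(P_4), and 20 words of S^3_(P_4)) and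
   are checked by an exhaustive backtracking search in which two vertices u, v
   of color i conflict when v lies in the ball of radius i around u. *)

Lemma dist_gt_homo (T T' : eqType) (e : rel T) (e' : rel T') (phi : T -> T')
    u v i :
  {homo phi : x y / e x y >-> e' x y} ->
  dist_gt e' (phi u) (phi v) i -> dist_gt e u v i.
Proof.
move=> phi_hom dist_phi p e_p last_p; rewrite -(size_map phi).
by apply: dist_phi; [exact: homo_path e_p | rewrite last_map last_p].
Qed.

Lemma packing_coloring_comp (T T' : finType) (e : rel T) (e' : rel T')
    (phi : T -> T') c f :
  injective phi -> {homo phi : x y / e x y >-> e' x y} ->
  packing_coloring e' c f -> packing_coloring e c (f \o phi).
Proof.
move=> phi_inj phi_hom [f_range f_packing]; split=> [x|u v uv fuv]; first exact: f_range.
apply: dist_gt_homo phi_hom _; apply: f_packing fuv.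
by apply: contra uv => /eqP/phi_inj->.
Qed.

Lemma packing_coloring_widen (T : finType) (e : rel T) c c' f :
  c <= c' -> packing_coloring e c f -> packing_coloring e c' f.
Proof. by move=> le_cc' [f_range f_packing]; split=> // x; have := f_range x; lia. Qed.

Lemma packing_chromatic_homo (T T' : finType) (e : rel T) (e' : rel T')
    (phi : T -> T') :
  injective phi -> {homo phi : x y / e x y >-> e' x y} ->
  packing_chromatic e <= packing_chromatic e'.
Proof.
move=> phi_inj phi_hom; rewrite /packing_chromatic.
case: (ex_minnP (has_packing_coloring_ex e')) => c /asboolP[f f_col] _.
case: ex_minnP => c0 _; apply; apply/asboolP.
by exists (f \o phi); exact: packing_coloring_comp f_col.
Qed.

Lemma packing_chromatic_gt (T : finType) (e : rel T) c :
  (forall f, ~ packing_coloring e c f) -> c < packing_chromatic e.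
Proof.
move=> no_col; rewrite /packing_chromatic ltnNge.
case: ex_minnP => c0 /asboolP[f f_col] _; apply/negP => le_c0c.
exact: no_col (packing_coloring_widen le_c0c f_col).
Qed.

Section SierpinskiPrefix.

Variables (k : nat) (G : rel 'I_k) (a : 'I_k).

Definition cons_word n (u : {ffun 'I_n -> 'I_k}) : {ffun 'I_n.+1 -> 'I_k} :=
  [ffun j => if unlift ord0 j is Some i then u i else a].

Lemma cons_word0 n (u : {ffun 'I_n -> 'I_k}) : cons_word u ord0 = a.
Proof. by rewrite ffunE unlift_none. Qed.

Lemma cons_word_lift n (u : {ffun 'I_n -> 'I_k}) i : cons_word u (lift ord0 i) = u i.
Proof. by rewrite ffunE liftK. Qed.

Lemma cons_word_inj n : injective (@cons_word n).
Proof.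
by move=> u v uv; apply/ffunP => i; rewrite -!(cons_word_lift _ i) uv.
Qed.

Lemma sierpinski_adj_cons n :
  {homo @cons_word n : u v / sierpinski_adj k n G u v >-> sierpinski_adj k n.+1 G u v}.
Proof.
move=> u v /existsP[i /and4P[/forallP pre uv_i G_i /forallP post]].
apply/existsP; exists (lift ord0 i); rewrite !cons_word_lift uv_i G_i /=.
apply/andP; split; apply/forallP => j; case: (unliftP ord0 j) => [j'|] ->.
- by rewrite !cons_word_lift !lift0 ltnS; apply: pre.
- by rewrite !cons_word0 eqxx implybT.
- by rewrite !cons_word_lift !lift0 ltnS; apply: post.
- by [].
Qed.

Lemma packing_chromatic_sierpinski_mono m n : m <= n ->
  packing_chromatic (sierpinski_adj k m G) <= packing_chromatic (sierpinski_adj k n G).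
Proof.
apply: (homo_leq (f := fun n => packing_chromatic (sierpinski_adj k n G)) leqnn leq_trans).
move=> {}n; exact: packing_chromatic_homo (@cons_word_inj n) (@sierpinski_adj_cons n).
Qed.

End SierpinskiPrefix.

Section ColorSearch.

Variables (T : eqType) (e : rel T) (vs : seq T) (c : nat).

Definition ball (i : nat) (u : T) : seq T :=
  iter i (fun B => undup (B ++ [seq y <- vs | has (e^~ y) B])) [:: u].

Lemma dist_gtW u v i : dist_gt e u v i.+1 -> dist_gt e u v i.
Proof. by move=> dist_uv p e_p last_p; apply: ltnW; apply: dist_uv. Qed.

Lemma ball_dist_gt i u v : v \in ball i u -> ~ dist_gt e u v i.
Proof.
elim: i v => [|i IH] v /=; first by rewrite inE => /eqP-> /(_ [::] isT erefl).
rewrite mem_undup mem_cat => /orP[/IH not_dist /dist_gtW // | ].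
rewrite mem_filter => /andP[/hasP[x /IH not_dist e_xv] _] dist_uv.
apply: not_dist => p e_p last_p; have := dist_uv (rcons p v).
by rewrite rcons_path e_p last_p e_xv last_rcons size_rcons ltnS; apply.
Qed.

Definition balls (w : T) : seq (seq T) := mkseq (ball ^~ w) c.+1.

(* [if] rather than [&&]: [vm_compute] evaluates both arguments of [andb],
   which would defeat the pruning. *)
Fixpoint colorable_from (W : seq (T * seq (seq T))) (prev : seq (T * nat)) : bool :=
  if W is (w, ball_w) :: W' then
    has (fun x => if all (fun p => [|| p.2 != x, p.1 == w | p.1 \notin nth [::] ball_w x])
                         prev
                  then colorable_from W' ((w, x) :: prev) else false) (iota 1 c)
  else true.

Definition colorable (W : seq T) : bool :=
  colorable_from [seq (w, balls w) | w <- W] [::].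

Variables (A : pred T) (f : T -> nat).
Hypotheses (f_range : {in A, forall x, 0 < f x <= c})
  (f_packing : {in A &, forall u v, u != v -> f u = f v -> dist_gt e u v (f u)}).

Lemma colorable_from_coloring W prev :
  {subset W <= A} -> (forall p, p \in prev -> p.1 \in A /\ f p.1 = p.2) ->
  colorable_from [seq (w, balls w) | w <- W] prev.
Proof.
elim: W prev => //= w W IH prev WA prevA.
have Aw : w \in A by apply: WA; rewrite mem_head.
have /andP[fw_gt0 fw_le] := f_range Aw.
apply/hasP; exists (f w); first by rewrite mem_iota; lia.
have -> : all (fun p => [|| p.2 != f w, p.1 == w | p.1 \notin nth [::] (balls w) (f w)])
              prev.
  apply/allP => -[u y] /prevA /= [Au <-].
  case: (eqVneq (f u) (f w)) => //= fuw; case: eqVneq => //= uw.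
  rewrite nth_mkseq ?ltnS //; apply/negP => /ball_dist_gt; apply.
  by apply: f_packing; rewrite // eq_sym.
apply: IH => [x Wx | p]; first by apply: WA; rewrite in_cons Wx orbT.
by rewrite in_cons => /orP[/eqP-> | /prevA].
Qed.

Lemma colorable_coloring W : {subset W <= A} -> colorable W.
Proof. by move=> WA; apply: colorable_from_coloring. Qed.

End ColorSearch.

(* Words are lists of [nat] rather than [{ffun 'I_m -> 'I_k}] because
   enumerations of ordinals are blocked under [vm_compute] (they go through the
   opaque [idP]); [decode] transfers adjacency back to the Sierpinski graph. *)
Definition nat_path_adj (x y : nat) : bool := (x.+1 == y) || (y.+1 == x).

Section Words.

Variable l : nat.

Definition is_word m (s : seq nat) : bool := (size s == m) && all (fun x => x < l) s.

Definition word_adj m (s t : seq nat) : bool :=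
  [&& is_word m s, is_word m t &
   has (fun i => [&& all (fun j => nth 0 s j == nth 0 t j) (iota 0 i),
                     nat_path_adj (nth 0 s i) (nth 0 t i) &
                     all (fun j => (nth 0 s j == nth 0 t i) && (nth 0 t j == nth 0 s i))
                         (iota i.+1 (m - i.+1))]) (iota 0 m)].

Fixpoint words m : seq (seq nat) :=
  if m is m'.+1 then [seq x :: s | x <- iota 0 l, s <- words m'] else [:: [::]].

Variables (k : nat) (le_lk : l <= k.+1).

Definition decode m (s : seq nat) : {ffun 'I_m -> 'I_k.+1} :=
  [ffun j : 'I_m => inord (nth 0 s j)].

Lemma decodeE m s (j : 'I_m) : is_word m s -> val (decode m s j) = nth 0 s j.
Proof.
case/andP=> _ /allP s_lt; rewrite ffunE /= inordK //.
by case: (ltnP j (size s)) => [/(mem_nth 0)/s_lt/leq_trans-> | /(nth_default 0)->].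
Qed.

Lemma decode_inj m : {in is_word m &, injective (decode m)}.
Proof.
move=> s t ws wt st; have /andP[/eqP size_s _] := ws; have /andP[/eqP size_t _] := wt.
apply: (@eq_from_nth _ 0) => [|i]; first by rewrite size_s size_t.
rewrite size_s => lt_im.
have := congr1 (fun u : {ffun 'I_m -> 'I_k.+1} => val (u (Ordinal lt_im))) st.
by rewrite /= !decodeE.
Qed.

Lemma decode_adj m :
  {homo decode m : s t / word_adj m s t >-> sierpinski_adj k.+1 m (path_graph k.+1) s t}.
Proof.
move=> s t /and3P[ws wt /hasP[i]]; rewrite mem_iota => /andP[_ lt_im].
case/and3P=> /allP pre adj_i /allP post.
apply/existsP; exists (Ordinal lt_im); rewrite /path_graph /= -!val_eqE /= !decodeE //.
apply/and4P; split => //.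
- apply/forallP => j; apply/implyP => /= lt_ji; rewrite -val_eqE /= !decodeE //.
  by apply: pre; rewrite mem_iota.
- by apply: contraTneq adj_i => ->; rewrite /nat_path_adj orbb (gtn_eqF (ltnSn _)).
- apply/forallP => j; apply/implyP => /= lt_ij; rewrite -!val_eqE /= !decodeE //.
  by apply: post; rewrite mem_iota; have := ltn_ord j; lia.
Qed.

End Words.

Lemma no_packing_coloring_of_words l k m c W f : l <= k.+1 ->
  all (is_word l m) W -> ~~ colorable (word_adj l m) (words l m) c W ->
  ~ packing_coloring (sierpinski_adj k.+1 m (path_graph k.+1)) c f.
Proof.
move=> le_lk /allP W_words /negP not_col [f_range f_packing]; apply: not_col.
apply: (@colorable_coloring _ _ _ _ (is_word l m) (f \o decode k m) _ _ _ W_words).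
- by move=> x _; apply: f_range.
- move=> u v wu wv uv fuv; apply: (dist_gt_homo (@decode_adj l k le_lk m)).
  by apply: f_packing fuv; apply: contra uv => /eqP/(decode_inj le_lk wu wv)->.
Qed.

Definition S2_witness : seq (seq nat) :=
  [:: [:: 1; 0]; [:: 1; 1]; [:: 1; 2]; [:: 1; 3];
      [:: 2; 0]; [:: 2; 1]; [:: 2; 2]; [:: 2; 3]].

Definition S3_witness : seq (seq nat) :=
  [:: [:: 1; 2; 3]; [:: 1; 2; 2]; [:: 1; 2; 1]; [:: 2; 1; 1]; [:: 1; 1; 2];
      [:: 1; 2; 0]; [:: 1; 1; 1]; [:: 1; 1; 3]; [:: 1; 3; 2]; [:: 2; 1; 0];
      [:: 2; 1; 2]; [:: 2; 0; 1]; [:: 2; 1; 3]; [:: 2; 2; 1]; [:: 1; 3; 1];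
      [:: 1; 3; 3]; [:: 2; 2; 0]; [:: 2; 2; 2]; [:: 2; 0; 0]; [:: 2; 0; 2]].

Lemma S2_witness_not_colorable : ~~ colorable (word_adj 4 2) (words 4 2) 3 S2_witness.
Proof. by vm_compute. Qed.

Lemma S3_witness_not_colorable : ~~ colorable (word_adj 4 3) (words 4 3) 4 S3_witness.
Proof. by vm_compute. Qed.

Lemma packing_chromatic_sierpinski_path2 k : 4 <= k ->
  4 <= packing_chromatic (sierpinski_adj k 2 (path_graph k)).
Proof.
case: k => // k le4k; apply: packing_chromatic_gt => f.
exact: no_packing_coloring_of_words le4k _ S2_witness_not_colorable.
Qed.

Lemma packing_chromatic_sierpinski_path3 k : 4 <= k ->
  5 <= packing_chromatic (sierpinski_adj k 3 (path_graph k)).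
Proof.
case: k => // k le4k; apply: packing_chromatic_gt => f.
exact: no_packing_coloring_of_words le4k _ S3_witness_not_colorable.
Qed.

Theorem proposition2 (n k : nat) : 4 <= k -> 3 <= n ->
  4 <= packing_chromatic (sierpinski_adj k 2 (path_graph k)) /\
  5 <= packing_chromatic (sierpinski_adj k n (path_graph k)).
Proof.
move=> le4k le3n; split; first exact: packing_chromatic_sierpinski_path2.
apply: leq_trans (packing_chromatic_sierpinski_path3 le4k) _.
exact: (packing_chromatic_sierpinski_mono _ (Ordinal le4k) le3n).
Qed.
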